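(* Let $\mathfrak{F}$ be a class of finite groups and let $G$ be a 2-generated finite soluble group with $G\notin\mathfrak{F}$. If $x,y\in V(G)$, then $x$ and $y$ belong to the same connected component of $\Gamma_\mathfrak{F}(G)$.
   Context: $V(G)$ is the set of $x\in G$ such that $G=\langle x,z\rangle$ for some $z\in G$. $\Gamma_\mathfrak{F}(G)$ is the graph whose vertices are the elements $g\in G$ for which some $h\in G$ satisfies $\langle g,h\rangle\notin\mathfrak{F}$, with $g,h$ adjacent iff $\langle g,h\rangle\notin\mathfrak{F}$. *)

From mathcomp Require Import all_boot all_fingroup all_solvable.
Set Implicit Arguments. Unset Strict Implicit. Unset Printing Implicit Defensive.
Local Open Scope group_scope.

(* A class of finite groups, restricted to the subgroups of the ambient
   finGroupType gT (only subgroups of G are ever tested for membership). *)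
Definition group_class (gT : finGroupType) := pred {set gT}.

Definition Vgen (gT : finGroupType) (G : {group gT}) : {set gT} :=
  [set x in G | [exists z in G, G == <<[set x; z]>>]].

Definition GammaF_adj (gT : finGroupType) (F : group_class gT)
  (G : {group gT}) : rel gT :=
  fun g h => [&& g \in G, h \in G & ~~ F <<[set g; h]>>].

Definition GammaF_vert (gT : finGroupType) (F : group_class gT)
  (G : {group gT}) : {set gT} :=
  [set g in G | [exists h in G, ~~ F <<[set g; h]>>]].

Definition two_generated (gT : finGroupType) (G : {group gT}) : Prop :=
  exists a b : gT, G :=: <<[set a; b]>>.

From mathcomp Require Import all_boot all_fingroup all_solvable.
Set Implicit Arguments. Unset Strict Implicit. Unset Printing Implicit Defensive.
Local Open Scope group_scope.

(* Induction on |G| through a minimal normal subgroup N, which is abelian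
   because G is soluble.  By induction the images of x and y are connected in
   the generating graph of G/N, and such a path lifts edge by edge: if
   G = <a, z> and G/N = <aN, bN>, then G = <a, nb> for some n in N.  Otherwise
   each n in N yields a complement of N containing a and nb, and the
   retractions onto these complements move z by pairwise distinct elements of
   N, so one of them fixes both a and z, hence all of G, forcing N = 1.  It
   remains to join two elements c and uc of V(G) with u in N.  Writing
   G = <c, d>, the pairs (u, v) of N x N with G <> <uc, vd> come from
   complements of N, so they are closed under (p, q, r) |-> p q^-1 r as N is
   abelian; if c and uc were in different components, a few such combinations
   would exhibit a generating pair among them.  Edges of the generating graph
   lie in Gamma_F(G) since G is not in F. *)

Definition gen_graph (gT : finGroupType) (G : {group gT}) : rel gT :=
  fun u w => [&& u \in G, w \in G & (G : {set gT}) == <<[set u; w]>>].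

Section GeneratingPairs.

Variable gT : finGroupType.
Implicit Types (G H N : {group gT}) (A : {set gT}) (s t : gT -> gT).

Lemma gen2C (u w : gT) : <<[set u; w]>> = <<[set w; u]>>.
Proof. by rewrite setUC. Qed.

Lemma gen2_mulr (u w : gT) : <<[set u; w]>> = <<[set u; w * u^-1]>>.
Proof.
have genl v : u \in <<[set u; v]>> by rewrite mem_gen ?set21.
have genr v : v \in <<[set u; v]>> by rewrite mem_gen ?set22.
apply/eqP; rewrite eqEsubset !gen_subG !subUset !sub1set !genl /=.
rewrite groupM ?groupV ?genl ?genr // andbT.
by rewrite -{1}(mulgKV u w) groupM ?genl ?genr.
Qed.

Lemma gen2_subG G (u w : gT) : u \in G -> w \in G -> <<[set u; w]>> \subset G.
Proof. by move=> Gu Gw; rewrite gen_subG subUset !sub1set Gu Gw. Qed.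

Lemma quotient_gen2 N (u w : gT) : u \in 'N(N) -> w \in 'N(N) ->
  <<[set u; w]>> / N = <<[set coset N u; coset N w]>>.
Proof.
move=> nNu nNw; rewrite /quotient morphim_gen ?subUset ?sub1set ?nNu //.
by rewrite morphimU !morphim_set1.
Qed.

Lemma VgenP G (x : gT) :
  reflect (x \in G /\ exists2 z, z \in G & (G : {set gT}) = <<[set x; z]>>)
          (x \in Vgen G).
Proof.
rewrite inE; apply: (iffP andP) => [[Gx] | [Gx [z Gz defG]]].
  by case/exists_inP=> z Gz /eqP defG; split=> //; exists z; rewrite // defG.
by split=> //; apply/exists_inP; exists z => //; apply/eqP/val_inj.
Qed.

Lemma gen_graph_Vgen G (u w : gT) : gen_graph G u w -> w \in Vgen G.
Proof.
case/and3P=> Gu Gw /eqP defG; apply/VgenP; split=> //.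
by exists u; rewrite // gen2C.
Qed.

Lemma gen_graph_common_neighbor G (u v w : gT) : u \in G -> v \in G -> w \in G ->
  (G : {set gT}) = <<[set u; w]>> -> (G : {set gT}) = <<[set v; w]>> ->
  connect (gen_graph G) u v.
Proof.
move=> Gu Gv Gw defGu defGv; apply: (@connect_trans _ _ w); apply: connect1.
  by rewrite /gen_graph Gu Gw -defGu eqxx.
by rewrite /gen_graph Gv Gw -gen2C -defGv eqxx.
Qed.

Lemma morph_in1 G s : {in G &, {morph s : x y / x * y}} -> s 1 = 1.
Proof. by move=> sM; apply: (@mulIg _ (s 1)); rewrite -sM ?mulg1 ?mul1g. Qed.

Lemma morph_in_eq_gen G A s t :
  {in G &, {morph s : x y / x * y}} -> {in G &, {morph t : x y / x * y}} ->
  (G : {set gT}) = <<A>> -> {in A, s =1 t} -> {in G, s =1 t}.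
Proof.
move=> sM tM defG eq_st.
have eqG : group_set [set g in G | s g == t g].
  apply/group_setP; split.
    by rewrite inE group1 (morph_in1 sM) (morph_in1 tM) eqxx.
  move=> g h; rewrite !inE => /andP[Gg /eqP eg] /andP[Gh /eqP eh].
  by rewrite groupM // sM // tM // eg eh eqxx.
have : <<A>> \subset Group eqG.
  rewrite gen_subG; apply/subsetP=> a Aa.
  by rewrite inE eq_st // eqxx andbT defG mem_gen.
by rewrite -defG => /subsetP sGeq g /sGeq; rewrite inE => /andP[_ /eqP].
Qed.

Section AffinePairs.

Variables (N : {group gT}) (P : gT -> gT -> bool).
Hypothesis P_affine : forall x1 y1 x2 y2 x3 y3,
  x1 \in N -> y1 \in N -> x2 \in N -> y2 \in N -> x3 \in N -> y3 \in N ->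
  P x1 y1 -> P x2 y2 -> P x3 y3 -> P (x1 * x2^-1 * x3) (y1 * y2^-1 * y3).

(* Each case combines a point of row x * t and a point of row t with (1, y),
   then moves within row x using (x, 1), (x, b^-1) and (x, y * y). *)
Lemma affine_pair_cases (x y b t : gT) :
  x \in N -> y \in N -> b \in N -> t \in N ->
  P x 1 -> P x b^-1 -> P x (y * y) -> P 1 y ->
  P t 1 || P t (y * b * y) -> P (x * t) 1 || P (x * t) (y * y) -> P x y.
Proof.
move=> Nx Ny Nb Nt Px1 Pxb Pxyy P1y.
have NN := (group1 N, groupM, groupV).
have comb x1 y1 x2 y2 x3 y3 x' y' :
    x1 \in N -> y1 \in N -> x2 \in N -> y2 \in N -> x3 \in N -> y3 \in N ->
    x' = x1 * x2^-1 * x3 -> y' = y1 * y2^-1 * y3 ->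
    P x1 y1 -> P x2 y2 -> P x3 y3 -> P x' y'.
  by move=> Nx1 Ny1 Nx2 Ny2 Nx3 Ny3 -> ->; apply: P_affine.
case/orP=> [Pt1 | Ptyby] /orP[Pxt1 | Pxtyy].
- apply: (comb (x * t) 1 t 1 1 y) => //; rewrite ?NN //.
    by rewrite mulg1 mulgK.
  by rewrite invg1 !mul1g.
- have Pxyyy : P x (y * y * y).
    apply: (comb (x * t) (y * y) t 1 1 y) => //; rewrite ?NN //.
      by rewrite mulg1 mulgK.
    by rewrite invg1 mulg1.
  apply: (comb x (y * y * y) x (y * y) x 1) => //; rewrite ?NN //.
    by rewrite mulgV mul1g.
  by rewrite mulg1 invMg !mulgA !mulgK.
- have Pxyb : P x (y^-1 * b^-1).
    apply: (comb (x * t) 1 t (y * b * y) 1 y) => //; rewrite ?NN //.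
      by rewrite mulg1 mulgK.
    by rewrite !invMg !mulgA mul1g mulgKV.
  have Pxy' : P x y^-1.
    apply: (comb x (y^-1 * b^-1) x b^-1 x 1) => //; rewrite ?NN //.
      by rewrite mulgV mul1g.
    by rewrite invgK mulg1 mulgKV.
  apply: (comb x 1 x y^-1 x 1) => //; rewrite ?NN //.
    by rewrite mulgV mul1g.
  by rewrite invgK mulg1 mul1g.
- have Pxyb : P x (y * b^-1).
    apply: (comb (x * t) (y * y) t (y * b * y) 1 y) => //; rewrite ?NN //.
      by rewrite mulg1 mulgK.
    by rewrite !invMg !mulgA mulgKV mulgK.
  apply: (comb x (y * b^-1) x b^-1 x 1) => //; rewrite ?NN //.
    by rewrite mulgV mul1g.
  by rewrite invgK mulg1 mulgKV.
Qed.

End AffinePairs.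

Section Splittings.

Variables G N : {group gT}.
Hypothesis nsNG : N <| G.

Let sNG : N \subset G := normal_sub nsNG.
Let nNG : G \subset 'N(N) := normal_norm nsNG.
Let memNG : forall z, z \in N -> z \in G := subsetP sNG.

(* Retractions of G onto complements of N, such as remgr N H for a complement
   H of N. *)
Definition splitting s :=
  [/\ {in G &, {morph s : x y / x * y}}, {in N, forall n, s n = 1}
    & {in G, forall g, g * (s g)^-1 \in N}].

Lemma splitting_mulV s t g : splitting s -> splitting t -> g \in G ->
  s g * (t g)^-1 \in N.
Proof.
case=> _ _ sN [_ _ tN] Gg.
have -> : s g * (t g)^-1 = (g * (s g)^-1)^-1 * (g * (t g)^-1).
  by rewrite invMg invgK !mulgA mulgKV.
by rewrite groupM ?groupV ?sN ?tN.
Qed.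

Lemma splitting_mem s g : splitting s -> g \in G -> s g \in G.
Proof.
move=> [_ _ sN] Gg.
have -> : s g = (g * (s g)^-1)^-1 * g by rewrite invMg invgK mulgKV.
by rewrite groupM // groupV memNG ?sN.
Qed.

Lemma splitting_mull s n g : splitting s -> n \in N -> g \in G ->
  s (n * g) = s g.
Proof.
case=> sM s1 _ Nn Gg.
by rewrite sM ?(memNG Nn) // s1 ?mul1g.
Qed.

Lemma splitting_fix_gen s A : splitting s -> (G : {set gT}) = <<A>> ->
  {in A, forall a, s a = a} -> N :=: 1.
Proof.
case=> sM s1 _ defG fixA.
have fixG := morph_in_eq_gen sM (t := id) (fun _ _ _ _ => erefl) defG fixA.
apply/trivgP/subsetP=> n Nn.
by rewrite inE -(fixG n (memNG Nn)) s1.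
Qed.

Lemma splitting_affine s1 s2 s3 : abelian N ->
  splitting s1 -> splitting s2 -> splitting s3 ->
  splitting (fun g => s1 g * (s2 g)^-1 * s3 g).
Proof.
move=> abN S1 S2 S3; have [m1 k1 _] := S1; have [m2 k2 _] := S2.
have [m3 k3 c3] := S3.
split=> [g h Gg Gh | n Nn | g Gg] /=.
- rewrite m1 // m2 // m3 // invMg.
  set p := s1 h * (s2 h)^-1; set q := (s2 g)^-1 * s3 g.
  have Np : p \in N by apply: splitting_mulV.
  have Nq : q \in N.
    have -> : q = (s3 g * (s2 g)^-1) ^ s2 g by rewrite /q conjgE !mulgA mulgKV.
    by rewrite memJ_norm ?splitting_mulV // (subsetP nNG) ?splitting_mem.
  transitivity (s1 g * (p * q) * s3 h); first by rewrite /p /q !mulgA.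
  by rewrite (centsP abN p Np q Nq) /p /q !mulgA.
- by rewrite k1 // k2 // k3 // invg1 !mulg1.
- have -> : g * (s1 g * (s2 g)^-1 * s3 g)^-1 = g * (s3 g)^-1 * (s2 g * (s1 g)^-1).
    by rewrite !invMg invgK !mulgA.
  by rewrite groupM ?c3 ?splitting_mulV.
Qed.

Lemma supplement_gen2_mul (x y u w : gT) :
  x \in N -> y \in N -> u \in G -> w \in G ->
  G \subset N * <<[set u; w]>> -> G \subset N * <<[set x * u; y * w]>>.
Proof.
move=> Nx Ny Gu Gw; have nN := subsetP nNG.
have nNxu : x * u \in 'N(N) by apply/nN; rewrite groupM // memNG.
have nNyw : y * w \in 'N(N) by apply/nN; rewrite groupM // memNG.
by rewrite -!quotientSK // !quotient_gen2 // ?nN // !coset_kerl.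
Qed.

Section MinimalAbelian.

Hypotheses (abN : abelian N) (minN : minnormal N G).

Let ntN : N :!=: 1.
Proof. by case/andP: (mingroupp minN). Qed.

Lemma proper_supplement_ti H : H \subset G -> G \subset N * H -> G :!=: H ->
  N :&: H = 1.
Proof.
move=> sHG sGNH neGH; have [_ minNP] := mingroupP minN.
have nNHG : G \subset 'N(N :&: H).
  apply: subset_trans sGNH (mul_subG _ _).
    exact: cents_norm (subset_trans abN (centS (subsetIl N H))).
  exact: normsI (subset_trans sHG nNG) (normG H).
case: (eqVneq (N :&: H) 1) => // ntNH.
have defNH : (N :&: H)%G :=: N by apply: minNP; rewrite ?subsetIl //= ntNH.
have sNH : N \subset H by rewrite -defNH subsetIr.
by move: neGH; rewrite eqEsubset sHG -(mulSGid sNH) sGNH.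
Qed.

Lemma proper_supplement_splitting H :
  H \subset G -> G \subset N * H -> G :!=: H ->
  splitting (remgr N H) /\ {in H, forall h, remgr N H h = h}.
Proof.
move=> sHG sGNH neGH; have tiNH := proper_supplement_ti sHG sGNH neGH.
have defG : N * H = G by apply/eqP; rewrite eqEsubset sGNH mul_subG.
have complH : H \in [complements to N in G] by apply/complP.
split=> [|h]; last exact: remgr_id.
split=> [|n|g Gg]; [exact: remgrM | exact: remgr1 |].
by rewrite -/(divgr N H g) mem_divgr ?defG.
Qed.

Lemma lift_generating_pair (a b z : gT) : a \in G -> b \in G -> z \in G ->
  (G : {set gT}) = <<[set a; z]>> -> G \subset N * <<[set a; b]>> ->
  exists2 y, y \in N & (G : {set gT}) = <<[set a; y * b]>>.
Proof.
move=> Ga Gb Gz defG sGNab.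
case: (pickP [pred y in N | G :==: <<[set a; y * b]>>]) =>
    [y /andP[Ny /eqP defGy] | noGen]; first by exists y.
pose H (y : gT) := generated_group [set a; y * b].
pose s (y : gT) := remgr N (H y).
have split_y y : y \in N -> splitting (s y) /\ {in H y, forall h, s y h = h}.
  move=> Ny; apply: proper_supplement_splitting.
  - exact: gen2_subG Ga (groupM (memNG Ny) Gb).
  - by have := supplement_gen2_mul (group1 N) Ny Ga Gb sGNab; rewrite mul1g.
  - by move: (noGen y); rewrite /= Ny => /negbT.
have s_a y : y \in N -> s y a = a.
  by move=> Ny; rewrite (split_y y Ny).2 // mem_gen ?set21.
have s_b y : y \in N -> s y b = y * b.
  move=> Ny; have [Sy fix_y] := split_y y Ny.
  have Gyb : y * b \in G by rewrite groupM // memNG.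
  rewrite -[b in s y b](mulKg y) (splitting_mull Sy) ?groupV //.
  by rewrite fix_y ?mem_gen ?set22.
(* As s y fixes a, it is determined by s y z; since s y b = y b, the map h
   is injective, hence onto N, and so some s y fixes z as well. *)
pose h (y : gT) := z * (s y z)^-1.
have h_inj : {in N &, injective h}.
  move=> y1 y2 Ny1 Ny2 /mulgI/invg_inj s_z.
  have [[sM1 _ _] _] := split_y y1 Ny1; have [[sM2 _ _] _] := split_y y2 Ny2.
  have eq_s12 := morph_in_eq_gen sM1 sM2 defG.
  apply: (mulIg b); rewrite -s_b // -s_b // eq_s12 // => w /set2P[]->//.
  by rewrite !s_a.
have im_h : h @: N = N.
  apply/eqP; rewrite eqEcard card_in_imset // leqnn andbT.
  apply/subsetP=> _ /imsetP[y Ny ->].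
  by have [[_ _ sN] _] := split_y y Ny; apply: sN.
have /imsetP[y Ny /esym/eqP hy1] : 1 \in h @: N by rewrite im_h group1.
have s_z : s y z = z by apply/esym/eqP; rewrite eq_mulgV1.
suff trivN : N :=: 1 by move: ntN; rewrite trivN eqxx.
by apply: (splitting_fix_gen (split_y y Ny).1 defG) => w /set2P[]->; rewrite ?s_a.
Qed.

Section NonGeneratingPairs.

Variables c d : gT.
Hypotheses (Gc : c \in G) (Gd : d \in G) (sGNcd : G \subset N * <<[set c; d]>>).

Definition genpair (x y : gT) := G :==: <<[set x * c; y * d]>>.

Lemma nongen_affine x1 y1 x2 y2 x3 y3 :
  x1 \in N -> y1 \in N -> x2 \in N -> y2 \in N -> x3 \in N -> y3 \in N ->
  ~~ genpair x1 y1 -> ~~ genpair x2 y2 -> ~~ genpair x3 y3 ->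
  ~~ genpair (x1 * x2^-1 * x3) (y1 * y2^-1 * y3).
Proof.
have fix_nongen x y : x \in N -> y \in N -> ~~ genpair x y ->
    exists s, [/\ splitting s, s c = x * c & s d = y * d].
  move=> Nx Ny nxy; have [] := proper_supplement_splitting
    (gen2_subG (groupM (memNG Nx) Gc) (groupM (memNG Ny) Gd))
    (supplement_gen2_mul Nx Ny Gc Gd sGNcd) nxy.
  move=> S fixH; exists (remgr N <<[set x * c; y * d]>>); split=> //.
    by rewrite -(splitting_mull S Nx Gc) fixH // mem_gen ?set21.
  by rewrite -(splitting_mull S Ny Gd) fixH // mem_gen ?set22.
move=> Nx1 Ny1 Nx2 Ny2 Nx3 Ny3 n1 n2 n3.
have [s1 [S1 c1 d1]] := fix_nongen _ _ Nx1 Ny1 n1.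
have [s2 [S2 c2 d2]] := fix_nongen _ _ Nx2 Ny2 n2.
have [s3 [S3 c3 d3]] := fix_nongen _ _ Nx3 Ny3 n3.
apply: contra ntN => /eqP defG.
have S := splitting_affine abN S1 S2 S3.
have Nx : x1 * x2^-1 * x3 \in N by rewrite !groupM ?groupV.
have Ny : y1 * y2^-1 * y3 \in N by rewrite !groupM ?groupV.
apply/eqP/(splitting_fix_gen S defG) => _ /set2P[]-> /=.
  rewrite (splitting_mull S1 Nx Gc) (splitting_mull S2 Nx Gc).
  by rewrite (splitting_mull S3 Nx Gc) c1 c2 c3 invMg !mulgA mulgK.
rewrite (splitting_mull S1 Ny Gd) (splitting_mull S2 Ny Gd).
by rewrite (splitting_mull S3 Ny Gd) d1 d2 d3 invMg !mulgA mulgK.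
Qed.

Lemma genpair_connect v w y : v \in N -> w \in N -> y \in N ->
  genpair v y -> genpair w y -> connect (gen_graph G) (v * c) (w * c).
Proof.
move=> Nv Nw Ny /eqP gv /eqP gw.
by apply: (gen_graph_common_neighbor _ _ _ gv gw); rewrite groupM // memNG.
Qed.

(* The common neighbour is z d c, as <u c, z d u^-1> = <u c, z d c>. *)
Lemma genpair_connect_conj v w z : v \in N -> w \in N -> z \in N ->
  genpair v (z * (d * v^-1 * d^-1)) -> genpair w (z * (d * w^-1 * d^-1)) ->
  connect (gen_graph G) (v * c) (w * c).
Proof.
move=> Nv Nw Nz /eqP gv /eqP gw.
have gen_dc u :
    <<[set u * c; z * (d * u^-1 * d^-1) * d]>> = <<[set u * c; z * (d * c)]>>.
  by rewrite [RHS]gen2_mulr invMg !mulgA mulgK mulgKV.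
rewrite gen_dc in gv; rewrite gen_dc in gw.
by apply: (gen_graph_common_neighbor _ _ _ gv gw); rewrite !groupM // memNG.
Qed.

Lemma conj_inv_mem v : v \in N -> d * v^-1 * d^-1 \in N.
Proof.
have -> : d * v^-1 * d^-1 = v^-1 ^ d^-1 by rewrite conjgE invgK mulgA.
by move=> Nv; rewrite memJ_norm ?groupV // (subsetP nNG).
Qed.

Lemma genpair_coset_connected x y : x \in N -> y \in N ->
  genpair 1 1 -> genpair x y -> connect (gen_graph G) c (x * c).
Proof.
move=> Nx Ny g11 gxy; rewrite -[c in connect _ c]mul1g; apply/idPn => nc.
pose b := d * x * d^-1.
have Nb : b \in N by rewrite /b -[x]invgK conj_inv_mem ?groupV.
have eb : d * x^-1 * d^-1 = b^-1 by rewrite /b !invMg invgK !mulgA.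
pose t := d^-1 * y^-1 * d.
have Nt : t \in N by rewrite /t -mulgA -conjgE memJ_norm ?groupV // (subsetP nNG).
have et : d * t^-1 * d^-1 = y.
  by rewrite /t !invMg !invgK !mulgA mulgV mul1g mulgK.
have ext : d * (x * t)^-1 * d^-1 = b^-1 * y.
  have ctx : t^-1 * x^-1 = x^-1 * t^-1 by apply: (centsP abN); rewrite groupV.
  by rewrite invMg ctx -et -eb !mulgA mulgKV.
clearbody b t.
have ng_x1 : ~~ genpair x 1 by apply: contra nc; apply: genpair_connect.
have ng_xb : ~~ genpair x b^-1.
  apply: contra nc => gxb; apply: (genpair_connect_conj (z := 1)) => //.
    by rewrite invg1 mulg1 mulgV mul1g.
  by rewrite eb mul1g.
have ng_1y : ~~ genpair 1 y.
  by apply: contra nc => g1y; apply: (genpair_connect _ _ Ny g1y).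
have ng_xyy : ~~ genpair x (y * y).
  apply: contra nc => gxyy.
  apply: (genpair_connect _ _ (groupM Ny Ny) _ gxyy) => //.
  apply: contraT => ng1yy; suff : ~~ genpair 1 1 by rewrite g11.
  have := nongen_affine (group1 N) Ny (group1 N) (groupM Ny Ny) (group1 N) Ny.
  by rewrite invg1 !mulg1 invMg !mulgA mulgV mul1g mulVg; apply.
(* v c cannot be joined both to c through d and to x c through y b d c. *)
have split_v v : v \in N ->
    ~~ genpair v 1 || ~~ genpair v (y * b * (d * v^-1 * d^-1)).
  move=> Nv; rewrite -negb_and; apply: contra nc => /andP[gv1 gvz].
  apply: connect_trans (genpair_connect _ Nv _ g11 gv1) _ => //.
  by apply: (genpair_connect_conj Nv Nx (groupM Ny Nb) gvz); rewrite eb mulgK.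
suff : ~~ genpair x y by rewrite gxy.
apply: (affine_pair_cases nongen_affine Nx Ny Nb Nt) => //.
  by rewrite -{2}et; apply: split_v.
by have := split_v _ (groupM Nx Nt); rewrite ext !mulgA mulgK.
Qed.

End NonGeneratingPairs.

Lemma coset_connected c c' : c \in Vgen G -> c' \in Vgen G -> c' * c^-1 \in N ->
  connect (gen_graph G) c c'.
Proof.
case/VgenP=> Gc [d Gd defG] /VgenP[Gc' [z Gz defG']] Nx.
have def_c' : c' = c' * c^-1 * c by rewrite mulgKV.
set x := c' * c^-1 in Nx def_c'; clearbody x; subst c'.
have sGNcd : G \subset N * <<[set c; d]>> by rewrite -defG mulG_subr.
have [y Ny defGy] : exists2 y, y \in N & (G : {set gT}) = <<[set x * c; y * d]>>.
  apply: (lift_generating_pair Gc' Gd Gz defG').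
  by have := supplement_gen2_mul Nx (group1 N) Gc Gd sGNcd; rewrite mul1g.
apply: (genpair_coset_connected Gc Gd sGNcd Nx Ny).
  by rewrite /genpair !mul1g -defG.
by rewrite /genpair -defGy.
Qed.

Lemma lift_gen_edge a B : a \in Vgen G -> gen_graph (G / N)%G (coset N a) B ->
  exists2 b, gen_graph G a b & coset N b = B.
Proof.
case/VgenP=> Ga [z Gz defG] /and3P[_ /morphimP[b nNb Gb ->] /eqP defQ].
have sGNab : G \subset N * <<[set a; b]>>.
  by rewrite -quotientSK // quotient_gen2 ?(subsetP nNG) // -defQ.
have [y Ny defGy] := lift_generating_pair Ga Gb Gz defG sGNab.
exists (y * b); last exact: coset_kerl.
by rewrite /gen_graph Ga -defGy eqxx groupM // memNG.
Qed.

Lemma lift_gen_path (p : seq (coset_of N)) a : a \in Vgen G ->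
  path (gen_graph (G / N)%G) (coset N a) p ->
  exists b, [/\ b \in Vgen G, connect (gen_graph G) a b
              & coset N b = last (coset N a) p].
Proof.
elim: p a => [|B p IHp] a Va /=; first by exists a.
case/andP=> /(lift_gen_edge Va)[b ab <-] pb.
have [b' [Vb' bb' <-]] := IHp b (gen_graph_Vgen ab) pb.
by exists b'; split=> //; apply: connect_trans (connect1 ab) bb'.
Qed.

End MinimalAbelian.

End Splittings.

End GeneratingPairs.

Lemma Vgen_connected (gT : finGroupType) (G : {group gT}) (x y : gT) :
  solvable G -> x \in Vgen G -> y \in Vgen G -> connect (gen_graph G) x y.
Proof.
move: {2}#|G| (leqnn #|G|) => n.
elim: n gT G x y => [|n IHn] gT G x y leGn solG Vx Vy.
  by move: leGn; rewrite leqNgt cardG_gt0.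
have [G1 | ntG] := eqVneq (G : {set gT}) 1.
  case/VgenP: Vx => Gx _; case/VgenP: Vy => Gy _.
  by move: Gx Gy; rewrite G1 !inE => /eqP-> /eqP->.
have [N minN sNG] := minnormal_exists ntG (normG G).
have [nNG ntN abelN] := minnormal_solvable minN sNG solG.
have abN : abelian N by case/is_abelemP: abelN => p _ /abelem_abelian.
have nsNG : N <| G by rewrite /normal sNG nNG.
have VQ u : u \in Vgen G -> coset N u \in Vgen (G / N)%G.
  case/VgenP=> Gu [z Gz defG]; apply/VgenP; split; first exact: mem_quotient.
  exists (coset N z); first exact: mem_quotient.
  by rewrite /= defG quotient_gen2 ?(subsetP nNG).
have ltQ : #|G / N| <= n by rewrite -ltnS (leq_trans (ltn_quotient ntN sNG)).
have /connectP[p pQ lastQ] :=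
  IHn _ _ _ _ ltQ (quotient_sol N solG) (VQ x Vx) (VQ y Vy).
have [x' [Vx' xx' lastx']] := lift_gen_path nsNG abN minN Vx pQ.
apply: connect_trans xx' (coset_connected nsNG abN minN Vx' Vy _).
have [[Gx' _] [Gy _]] := (VgenP _ _ Vx', VgenP _ _ Vy).
rewrite -mem_rcoset; apply/rcoset_kercosetP; rewrite ?(subsetP nNG) //.
by rewrite lastx' lastQ.
Qed.

Theorem lemma6p1 (gT : finGroupType) (F : group_class gT) (G : {group gT})
  (hsol : solvable G) (h2 : two_generated G) (hGF : ~~ F (G : {set gT}))
  (x y : gT) (hx : x \in Vgen G) (hy : y \in Vgen G) :
  [/\ x \in GammaF_vert F G, y \in GammaF_vert F G
    & connect (GammaF_adj F G) x y].
Proof.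
(* h2 is redundant: hx already makes G 2-generated. *)
have vert u : u \in Vgen G -> u \in GammaF_vert F G.
  case/VgenP=> Gu [z Gz defG]; rewrite inE Gu; apply/exists_inP.
  by exists z; rewrite // -defG.
split; [exact: vert | exact: vert |].
apply: (connect_sub _ (Vgen_connected hsol hx hy)) => u w /and3P[Gu Gw /eqP defG].
by apply: connect1; rewrite /GammaF_adj Gu Gw -defG hGF.
Qed.
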